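(* Let $G$ be a prime $\{P_5,\overline{P_5}\}$-free graph and $v\in V(G)$. (1) If $v$ is antisimplicial and $u$ is a vertex non-adjacent to $v$ chosen so that $|N(u)\cap N(v)|$ is minimum among all vertices non-adjacent to $v$, then $u$ is simplicial. (2) If $v$ is simplicial and $u$ is a vertex adjacent to $v$ chosen so that $|N(u)\cup N(v)|$ is maximum among all neighbors of $v$, then $u$ is antisimplicial.
   Context: All graphs are finite and simple. $N(x)$ is the set of neighbors of $x$. $P_5$ is the path on five vertices and $\overline{P_5}$ its complement; $G$ is $H$-free if it has no induced subgraph isomorphic to $H$. A vertex $b\notin X$ is mixed on $X$ if it has both a neighbor and a non-neighbor in $X$. A homogeneous set is a set $X\subseteq V(G)$ with $1<|X|<|V(G)|$ such that no vertex outside $X$ is mixed on $X$. $G$ is prime if $|V(G)|\ge4$ and has no homogeneous set. A vertex $v$ is simplicial if $N(v)$ is a clique, antisimplicial if $V(G)\setminus N(v)$ is a stable set. *)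

From mathcomp Require Import all_boot.
Set Implicit Arguments. Unset Strict Implicit. Unset Printing Implicit Defensive.

Definition simple_graph (T : finType) (e : rel T) : Prop :=
  symmetric e /\ irreflexive e.

Definition nbhd (T : finType) (e : rel T) (x : T) : {set T} := [set y | e x y].

Definition has_induced (S T : finType) (h : rel S) (e : rel T) : Prop :=
  exists f : S -> T, injective f /\ forall a b, h a b = e (f a) (f b).

Definition H_free (S T : finType) (h : rel S) (e : rel T) : Prop :=
  ~ has_induced h e.

Definition P5 : rel 'I_5 := fun i j => (i.+1 == j :> nat) || (j.+1 == i :> nat).
Definition coP5 : rel 'I_5 := fun i j => (i != j) && ~~ P5 i j.

Definition mixed (T : finType) (e : rel T) (b : T) (X : {set T}) : bool :=
  (b \notin X) && [exists x in X, e b x] && [exists x in X, ~~ e b x].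

Definition homogeneous (T : finType) (e : rel T) (X : {set T}) : bool :=
  (1 < #|X| < #|T|) && [forall b, ~~ mixed e b X].

Definition prime_graph (T : finType) (e : rel T) : Prop :=
  4 <= #|T| /\ forall X : {set T}, ~~ homogeneous e X.

Definition is_clique (T : finType) (e : rel T) (X : {set T}) : bool :=
  [forall x in X, forall y in X, (x != y) ==> e x y].
Definition is_stable (T : finType) (e : rel T) (X : {set T}) : bool :=
  [forall x in X, forall y in X, ~~ e x y].

Definition simplicial (T : finType) (e : rel T) (v : T) : bool :=
  is_clique e (nbhd e v).
Definition antisimplicial (T : finType) (e : rel T) (v : T) : bool :=
  is_stable e (~: nbhd e v).

(* Part (1).  Since V \ N(v) is stable, N(u) ⊆ N(v).  We show that no
   vertex z outside N(u) is mixed on a non-edge {a, b} of N(u): if z ~ v,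
   such a z yields a house (= co-P5) on {a, b, z, u, v}; if z ≁ v, minimality of u
   provides t ∈ N(z) ∩ N(v) \ N(u), and every adjacency pattern of t on {a, b}
   yields a house or a P5.  In a prime graph a proper vertex set on whose
   non-edges no outside vertex is mixed must be a clique: otherwise the
   anticomponent of a non-edge would be a homogeneous set.  Hence N(u) is a
   clique, i.e. u is simplicial.

   Part (2) is part (1) applied to the complement graph, which is again prime
   and {P5, co-P5}-free, and in which simplicial and antisimplicial vertices
   swap roles while N(w) ∩ N(v) becomes the complement of N(w) ∪ N(v). *)

From mathcomp Require Import all_boot.
Set Implicit Arguments. Unset Strict Implicit. Unset Printing Implicit Defensive.

(* A pattern graph h is separating when any two distinct vertices are adjacent
   or distinguished by some third vertex; adjacency-preserving maps out of it
   into a loopless graph are then automatically injective. *)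
Definition separating (S : finType) (h : rel S) : bool :=
  [forall i, forall j, (i == j) || h i j || [exists k, h i k != h j k]].

Lemma has_induced_of_adj (S T : finType) (h : rel S) (e : rel T) (f : S -> T) :
  irreflexive e -> separating h ->
  (forall a b, h a b = e (f a) (f b)) -> has_induced h e.
Proof.
move=> irr sep hf; exists f; split => // i j fij.
move/forallP: sep => /(_ i) /forallP /(_ j).
case: eqP => // _ /=; rewrite hf fij irr /= => /existsP [k].
by rewrite !hf fij eqxx.
Qed.

Ltac separating_I5 :=
  apply/forallP => -[[|[|[|[|[|?]]]]] ?] //;
  apply/forallP => -[[|[|[|[|[|?]]]]] ?] //=;
  apply/existsP;
  first [ by exists (@Ordinal 5 0 isT) | by exists (@Ordinal 5 1 isT)
        | by exists (@Ordinal 5 2 isT) | by exists (@Ordinal 5 3 isT)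
        | by exists (@Ordinal 5 4 isT) ].

Lemma separating_P5 : separating P5.
Proof. rewrite /separating; separating_I5. Qed.

Lemma separating_coP5 : separating coP5.
Proof. rewrite /separating; separating_I5. Qed.

Section Configurations.
Variables (T : finType) (e : rel T).
Hypotheses (sym : symmetric e) (irr : irreflexive e).

Lemma induced_P5 a0 a1 a2 a3 a4 :
  e a0 a1 -> e a1 a2 -> e a2 a3 -> e a3 a4 ->
  ~~ e a0 a2 -> ~~ e a0 a3 -> ~~ e a0 a4 -> ~~ e a1 a3 -> ~~ e a1 a4 ->
  ~~ e a2 a4 -> has_induced P5 e.
Proof.
move=> h01 h12 h23 h34 /negbTE n02 /negbTE n03 /negbTE n04 /negbTE n13
  /negbTE n14 /negbTE n24.
apply: (@has_induced_of_adj _ _ _ _ (fun i : 'I_5 => nth a0 [:: a0; a1; a2; a3; a4] i)) => //.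
  exact: separating_P5.
move=> [[|[|[|[|[|i]]]]] Hi] [[|[|[|[|[|j]]]]] Hj] //=;
  rewrite ?irr // ?h01 ?h12 ?h23 ?h34 ?n02 ?n03 ?n04 ?n13 ?n14 ?n24 //;
  rewrite sym ?h01 ?h12 ?h23 ?h34 ?n02 ?n03 ?n04 ?n13 ?n14 ?n24 //.
Qed.

(* The complement of P5 is the house: the induced 4-cycle a - u - b - x - a
   with a roof vertex w adjacent to a and x only. *)
Lemma induced_house a b w u x :
  e a w -> e a u -> e a x -> e b u -> e b x -> e w x ->
  ~~ e a b -> ~~ e b w -> ~~ e w u -> ~~ e u x -> has_induced coP5 e.
Proof.
move=> h02 h03 h04 h13 h14 h24 /negbTE n01 /negbTE n12 /negbTE n23 /negbTE n34.
apply: (@has_induced_of_adj _ _ _ _ (fun i : 'I_5 => nth a [:: a; b; w; u; x] i)) => //.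
  exact: separating_coP5.
move=> [[|[|[|[|[|i]]]]] Hi] [[|[|[|[|[|j]]]]] Hj] //=;
  rewrite ?irr // ?h02 ?h03 ?h04 ?h13 ?h14 ?h24 ?n01 ?n12 ?n23 ?n34 //;
  rewrite sym ?h02 ?h03 ?h04 ?h13 ?h14 ?h24 ?n01 ?n12 ?n23 ?n34 //.
Qed.

End Configurations.

(* In a prime graph, a set B avoiding some vertex is a clique as soon as no
   vertex outside B is mixed on a non-edge of B: otherwise the anticomponent
   of B containing a non-edge (its component for non-adjacency) would be a
   homogeneous set. *)
Lemma prime_clique_of_unmixed (T : finType) (e : rel T) (B : {set T}) :
  symmetric e -> prime_graph e -> #|B| < #|T| ->
  (forall z a b, z \notin B -> a \in B -> b \in B -> ~~ e a b ->
     e z a -> e z b) ->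
  is_clique e B.
Proof.
move=> sym [_ prim] ltBT unmixed.
apply/idPn => /forall_inPn [x xB /forall_inPn [y yB]].
rewrite negb_imply => /andP [xy nxy].
pose r := [rel p q | [&& p \in B, q \in B & ~~ e p q]].
pose K := [set k | connect r x k].
have KB : K \subset B.
  have clB : closed r (mem B) by move=> p q /and3P [-> -> _].
  by apply/subsetP => k; rewrite inE => /(closed_connect clB) <-.
apply: (negP (prim K)); apply/andP; split.
  apply/andP; split; last exact: leq_ltn_trans (subset_leq_card KB) ltBT.
  apply/card_gt1P; exists x, y; rewrite !inE connect0 xy; split => //.
  by apply: connect1; rewrite /= xB yB.
apply/forallP => z; apply/negP.
case/andP => /andP [zK /exists_inP [k1 k1K ez1]] /exists_inP [k2 k2K nez2].
have [zB | zB] := boolP (z \in B).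
  (* a vertex of B with a non-neighbour in K lies in K *)
  move: zK; rewrite inE => /negP; apply.
  apply: (connect_trans (y := k2)); first by rewrite inE in k2K.
  by apply: connect1; rewrite /= (subsetP KB) // zB /= sym.
(* outside B, the neighbourhood of z is closed under the non-edges of B *)
have clz : closed r (mem [pred k | e z k]).
  move=> p q /and3P [pB qB npq] /=; apply/idP/idP; first exact: unmixed.
  by apply: unmixed; rewrite // sym.
move: k1K k2K; rewrite !inE => /(closed_connect clz) h1 /(closed_connect clz) h2.
by move: h1 h2 ez1 nez2; rewrite !inE /= => <- <- ->.
Qed.

Section AntisimplicialVertex.
Variables (T : finType) (e : rel T).
Hypotheses (sym : symmetric e) (irr : irreflexive e) (primeG : prime_graph e).
Hypotheses (P5_free : H_free P5 e) (house_free : H_free coP5 e).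

Variables v u : T.
Hypothesis antis : antisimplicial e v.
Hypothesis nuv : ~~ e u v.
Hypothesis min_u : forall w, w != v -> ~~ e w v ->
  #|nbhd e u :&: nbhd e v| <= #|nbhd e w :&: nbhd e v|.

Lemma antisimplicial_nbhd w y : ~~ e v w -> e w y -> e v y.
Proof.
move=> nvw ewy; apply/negPn/negP => nvy.
move/forall_inP: antis => /(_ w); rewrite !inE nvw => /(_ isT) /forall_inP.
by move/(_ y); rewrite !inE nvy ewy => /(_ isT).
Qed.

Lemma nbhd_u_sub y : y \in nbhd e u -> y \in nbhd e v.
Proof. by rewrite !inE; apply: antisimplicial_nbhd; rewrite sym. Qed.

(* A non-neighbour z of u adjacent to v is not mixed on a non-edge {a, b} of
   N(u): otherwise {a, b, z, u, v} induces a house. *)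
Lemma unmixed_near z a b :
  ~~ e u z -> e v z -> a \in nbhd e u -> b \in nbhd e u -> ~~ e a b ->
  e z a -> e z b.
Proof.
move=> nuz evz aN bN nab eza; apply/negPn/negP => nzb; apply: house_free.
have := nbhd_u_sub aN; have := nbhd_u_sub bN; move: aN bN.
rewrite !inE => eua eub evb eva.
by apply: (induced_house sym irr (a := a) (b := b) (w := z) (u := u) (x := v));
  first [done | by rewrite sym].
Qed.

(* Minimality of u: a non-neighbour z of v that misses some vertex of N(u)
   has a neighbour in N(v) \ N(u), for otherwise
   N(z) ∩ N(v) ⊊ N(u) ∩ N(v). *)
Lemma min_witness z b :
  z != v -> ~~ e z v -> b \in nbhd e u -> ~~ e z b ->
  exists t, [/\ e z t, e v t & ~~ e u t].
Proof.
move=> zv nzv bN nzb.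
have [t] : exists2 t, t \in nbhd e z :&: nbhd e v &
                      t \notin nbhd e u :&: nbhd e v.
  apply/subsetPn/negP => sub.
  have : nbhd e z :&: nbhd e v \proper nbhd e u :&: nbhd e v.
    apply/properP; split => //; exists b; first by rewrite inE bN nbhd_u_sub.
    by rewrite !inE negb_and nzb.
  by move/proper_card; rewrite ltnNge min_u.
by rewrite !inE => /andP [ezt evt]; rewrite evt andbT => nut; exists t.
Qed.

(* A common non-neighbour z of u and v is not mixed on a non-edge {a, b} of
   N(u): the witness t of minimality is adjacent to z and v but not u, and
   according to its adjacency to a and b we find a house on {a, b, z, u, t},
   a vertex t mixed on {a, b} contradicting [unmixed_near], or the induced
   path t - z - a - u - b. *)
Lemma unmixed_far z a b :
  ~~ e u z -> ~~ e v z -> a \in nbhd e u -> b \in nbhd e u -> ~~ e a b ->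
  e z a -> e z b.
Proof.
move=> nuz nvz aN bN nab eza; apply/negPn/negP => nzb.
have zv : z != v.
  by apply: contraNneq nzb => ->; move: (nbhd_u_sub bN); rewrite inE.
have nzv : ~~ e z v by rewrite sym.
have [t [ezt evt nut]] := min_witness zv nzv bN nzb.
move: (aN) (bN); rewrite !inE => eua eub.
case eta: (e t a); case etb: (e t b).
- apply: house_free.
  by apply: (induced_house sym irr (a := a) (b := b) (w := z) (u := u) (x := t));
    first [done | by rewrite sym].
- by move: (unmixed_near nut evt aN bN nab eta); rewrite etb.
- have nba : ~~ e b a by rewrite sym.
  by move: (unmixed_near nut evt bN aN nba etb); rewrite eta.
- apply: P5_free.
  by apply: (induced_P5 sym irr (a0 := t) (a1 := z) (a2 := a) (a3 := u) (a4 := b));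
    first [done | by rewrite sym | by rewrite ?eta ?etb].
Qed.

(* No vertex outside N(u) is mixed on a non-edge of N(u); this covers u
   itself, which is complete to N(u). *)
Lemma nbhd_u_unmixed z a b :
  z \notin nbhd e u -> a \in nbhd e u -> b \in nbhd e u -> ~~ e a b ->
  e z a -> e z b.
Proof.
rewrite inE => nuz; case evz: (e v z); first exact: unmixed_near.
by apply: unmixed_far; rewrite ?evz.
Qed.

(* Part (1) of the lemma: N(u) is a clique, being a set that misses u and
   on whose non-edges no vertex is mixed. *)
Lemma min_common_simplicial : simplicial e u.
Proof.
apply: prime_clique_of_unmixed => //; last exact: nbhd_u_unmixed.
rewrite -cardsT; apply: proper_card; apply/properP; split; first exact: subsetT.
by exists u; rewrite !inE ?irr.
Qed.

End AntisimplicialVertex.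

Section Complement.
Variables (T : finType) (e : rel T).
Hypotheses (sym : symmetric e) (irr : irreflexive e).

Definition compl_graph : rel T := fun x y => (x != y) && ~~ e x y.

Lemma compl_simple : simple_graph compl_graph.
Proof.
split; last by move=> x; rewrite /compl_graph eqxx.
by move=> x y; rewrite /compl_graph eq_sym sym.
Qed.

Lemma compl_mixed b X : mixed compl_graph b X = mixed e b X.
Proof.
rewrite /mixed; have [bX | bX] //= := boolP (b \notin X).
have ce_nX x : x \in X -> compl_graph b x = ~~ e b x.
  by move=> xX; rewrite /compl_graph; case: eqP => // bx; move: bX; rewrite bx xX.
rewrite andbC; congr (_ && _); apply/exists_inP/exists_inP => -[x xX h];
  by exists x => //; move: h; rewrite ce_nX ?negbK.
Qed.

Lemma compl_prime : prime_graph e -> prime_graph compl_graph.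
Proof.
move=> [card4 primeG]; split => // X.
suff -> : homogeneous compl_graph X = homogeneous e X by [].
by congr (_ && _); apply: eq_forallb => b; rewrite compl_mixed.
Qed.

Lemma compl_P5_free : H_free coP5 e -> H_free P5 compl_graph.
Proof.
move=> free [f [inj hf]]; apply: free; exists f; split => // a b.
move: (hf a b); rewrite /coP5 /compl_graph (inj_eq inj).
by case: (a =P b) => [->|_] /= => [|->]; rewrite ?irr ?negbK.
Qed.

Lemma compl_house_free : H_free P5 e -> H_free coP5 compl_graph.
Proof.
move=> free [f [inj hf]]; apply: free; exists f; split => // a b.
move: (hf a b); rewrite /coP5 /compl_graph (inj_eq inj).
case: (a =P b) => [->|_] /=; first by rewrite irr /P5 (gtn_eqF (ltnSn _)).
by case: (P5 a b); case: (e _ _).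
Qed.

Lemma compl_nonadj x y : ~~ compl_graph x y = (x == y) || e x y.
Proof. by rewrite /compl_graph negb_and !negbK. Qed.

Lemma compl_nonnbhd v x : (x \in ~: nbhd compl_graph v) = (v == x) || e v x.
Proof. by rewrite !inE compl_nonadj. Qed.

(* The non-neighbourhood of v in the complement is N(v) ∪ {v}, so the
   antisimplicial vertices of the complement are the simplicial ones of e. *)
Lemma compl_antisimplicial v : antisimplicial compl_graph v = simplicial e v.
Proof.
apply/idP/idP => /forall_inP H; apply/forall_inP => x.
  rewrite inE => evx; apply/forall_inP => y; rewrite inE => evy.
  apply/implyP => xy; have := H x; rewrite compl_nonnbhd evx orbT.
  move=> /(_ isT) /forall_inP /(_ y); rewrite compl_nonnbhd evy orbT.
  by rewrite compl_nonadj (negbTE xy) => /(_ isT).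
rewrite compl_nonnbhd => /orP xN; apply/forall_inP => y.
rewrite compl_nonnbhd compl_nonadj => /orP yN.
case: xN => [/eqP <- | evx]; case: yN => [/eqP <- | evy];
  rewrite ?eqxx ?evy ?(sym x v) ?evx ?orbT //.
have [//|xy] /= := eqVneq x y.
have := H x; rewrite inE evx => /(_ isT) /forall_inP /(_ y).
by rewrite inE evy xy => /(_ isT).
Qed.

(* The neighbourhood of u in the complement is V \ N[u], so the simplicial
   vertices of the complement are the antisimplicial ones of e. *)
Lemma compl_simplicial u : simplicial compl_graph u = antisimplicial e u.
Proof.
apply/idP/idP => /forall_inP H; apply/forall_inP => x.
  rewrite !inE => nux; apply/forall_inP => y; rewrite !inE => nuy.
  have [<-|xy] := eqVneq x y; first by rewrite irr.
  have [<-|ux] := eqVneq u x; first by [].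
  have [<-|uy] := eqVneq u y; first by rewrite sym.
  have := H x; rewrite !inE /compl_graph ux nux => /(_ isT) /forall_inP.
  by move=> /(_ y); rewrite !inE uy nuy xy => /(_ isT).
rewrite !inE => /andP [_ nux]; apply/forall_inP => y; rewrite !inE.
case/andP => _ nuy; apply/implyP => xy; rewrite /compl_graph xy /=.
have := H x; rewrite !inE nux => /(_ isT) /forall_inP /(_ y).
by rewrite !inE nuy => /(_ isT).
Qed.

Lemma compl_common_nbhd w v : e w v ->
  nbhd compl_graph w :&: nbhd compl_graph v = ~: (nbhd e w :|: nbhd e v).
Proof.
move=> ewv; apply/setP => y; rewrite !inE /compl_graph negb_or.
case: (w =P y) => [<-|_]; first by rewrite sym ewv /= andbF.
by case: (v =P y) => [<-|_] //=; rewrite ewv.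
Qed.

End Complement.

(* Part (2) of the lemma, by part (1) in the complement graph. *)
Lemma max_union_antisimplicial (T : finType) (e : rel T) :
  simple_graph e -> prime_graph e -> H_free P5 e -> H_free coP5 e ->
  forall v u : T, simplicial e v -> e u v ->
  (forall w, e w v -> #|nbhd e w :|: nbhd e v| <= #|nbhd e u :|: nbhd e v|) ->
  antisimplicial e u.
Proof.
move=> [sym irr] primeG P5_free house_free v u simp euv max_u.
have uv : u != v by apply: contraTneq euv => ->; rewrite irr.
rewrite -(compl_simplicial sym irr).
have [csym cirr] := compl_simple sym.
apply: (min_common_simplicial csym cirr (compl_prime primeG)
  (compl_P5_free irr house_free) (compl_house_free irr P5_free) (v := v)).
- by rewrite compl_antisimplicial.
- by rewrite /compl_graph uv negbK.
- move=> w wv; rewrite /compl_graph wv negbK => ewv.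
  rewrite (compl_common_nbhd sym euv) (compl_common_nbhd sym ewv).
  rewrite (cardsCs (~: (nbhd e u :|: _))) (cardsCs (~: (nbhd e w :|: _))).
  by rewrite !setCK leq_sub2l // max_u.
Qed.

Theorem lemma2p9 (T : finType) (e : rel T) :
  simple_graph e -> prime_graph e -> H_free P5 e -> H_free coP5 e ->
  forall v : T,
    (antisimplicial e v ->
     forall u : T, u != v -> ~~ e u v ->
     (forall w : T, w != v -> ~~ e w v ->
        #|nbhd e u :&: nbhd e v| <= #|nbhd e w :&: nbhd e v|) ->
     simplicial e u) /\
    (simplicial e v ->
     forall u : T, e u v ->
     (forall w : T, e w v ->
        #|nbhd e w :|: nbhd e v| <= #|nbhd e u :|: nbhd e v|) ->
     antisimplicial e u).
Proof.
move=> simple primeG P5_free house_free v; split.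
  move=> antis u _ nuv min_u; have [sym irr] := simple.
  exact: (min_common_simplicial sym irr primeG P5_free house_free antis nuv).
by move=> simp u; apply: max_union_antisimplicial simp.
Qed.
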